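(* Define normal-ordered differential polynomials $\mathscr{P}^{(k)}_n$ in variables $A_{n-1},\dots,A_1,Q$ recursively by $\mathscr{P}^{(k)}_1(Q)=Q$ and, for $n\ge2$, $$\mathscr{P}^{(k)}_n(A_{n-1},\dots,A_1,Q)=(k+n-1)\,\partial\mathscr{P}^{(k+1)}_{n-1}+:\Big(Q+\sum_{i=1}^{n-1}A_i\Big)\mathscr{P}^{(k+1)}_{n-1}:,$$ where $\mathscr{P}^{(k+1)}_{n-1}=\mathscr{P}^{(k+1)}_{n-1}(A_{n-2},\dots,A_1,Q)$. Then, in the $n[0]$ realization at level $k$ (with $A_i,Q$ the currents of that realization), the field $\mathcal{F}^{(k)}_{n[0]}=-:\mathscr{P}^{(k)}_n(A_{n-1},\dots,A_1,Q)e^{-\Xi}:$ commutes with the screenings $E_i$ ($1\le i\le n-1$) and $\Psi$, i.e. lies in $\mathcal{W}_{n[0]}(k)$. Equivalently, $\mathcal{F}^{(k)}_{n[0]}=\big((k+n-1)\partial+n\mathcal{H}^{(k)}_{n[0]}-(n-1)\mathcal{H}^{(k+1)}_{(n-1)[0]}\big)\mathcal{F}^{(k+1)}_{(n-1)[0]}$, where the level-$(k+1)$ rank-$(n-1)$ realization is built from the same fields $A_{n-2},\dots,A_1,Q,Y$.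
   Context: Setup for $m=0$ at rank $n\ge2$ and generic level $k$ ($k\neq -n$), $K=k+n$: free scalar fields $\varphi=(\varphi_1,\dots,\varphi_{n+1})$ with $\partial\varphi_i(z)\partial\varphi_j(w)\sim\delta_{ij}(z-w)^{-2}$; vectors $a_{n-1},\dots,a_1,\psi,\xi\in\mathbb{C}^{n+1}$ with nonzero products $(a_i,a_i)=2K$, $(a_i,a_{i+1})=-K$ ($1\le i\le n-2$), $(a_1,\psi)=-K$, $(\psi,\psi)=1$, $(\psi,\xi)=1$, all others (incl. $(\xi,\xi)$, $(a_i,\xi)$) zero. Currents $A_i=(a_i,\partial\varphi)$, $Q=(\psi,\partial\varphi)$, $Y=(\xi,\partial\varphi)$, field $\Xi=(\xi,\varphi)$. Screenings $E_i=\oint e^{(a_i,\varphi)}$, $\Psi=\oint e^{(\psi,\varphi)}$; a field $X(w)$ commutes with $\oint s$ if the residue at $z=w$ of $s(z)X(w)$ vanishes. $\mathcal{W}_{n[0]}(k)$ is the centralizer of these screenings in the space of fields $:P(\partial\varphi)e^{p\Xi}:$, $p\in\mathbb{Z}$. Note that the rank-$(n-1)$, level-$(k+1)$ realization has the same value $K=(k+1)+(n-1)$, so its vectors $a_{n-2},\dots,a_1,\psi,\xi$ can be identified with those of the rank-$n$ level-$k$ one. $\mathcal{H}^{(k)}_{n[0]}=\ell_n(k)Y+\sum_{i=1}^{n-1}\frac{n-i}{n}A_i+Q$ with $\ell_n(k)=\frac{n-1}{n}k+n-2$. *)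

From HB Require Import structures.
From mathcomp Require Import all_boot all_order all_algebra.
Set Implicit Arguments. Unset Strict Implicit. Unset Printing Implicit Defensive.
Import Order.TTheory GRing.Theory Num.Theory.
Local Open Scope ring_scope.

(* Syntax of (normal-ordered) differential polynomials in the free bosons
   phi_0, ..., phi_{N-1}:  DVar i m  stands for  d^{m+1} phi_i.
   Normal ordering of free-boson differential polynomials is commutative,
   so the normal-ordered product is DMul. *)
Inductive dpoly (C : Type) (N : nat) : Type :=
| DCst of C
| DVar of 'I_N & nat
| DAdd of dpoly C N & dpoly C N
| DMul of dpoly C N & dpoly C N.
Arguments DCst {C N}.
Arguments DVar {C N}.
Arguments DAdd {C N}.
Arguments DMul {C N}.

Fixpoint deval (C : Type) (N : nat) (R : pzRingType) (cst : C -> R)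
    (var : 'I_N -> nat -> R) (p : dpoly C N) : R :=
  match p with
  | DCst c => cst c
  | DVar i m => var i m
  | DAdd p q => deval cst var p + deval cst var q
  | DMul p q => deval cst var p * deval cst var q
  end.

Fixpoint dderiv (C : fieldType) (N : nat) (p : dpoly C N) : dpoly C N :=
  match p with
  | DCst _ => DCst 0
  | DVar i m => DVar i m.+1
  | DAdd p q => DAdd (dderiv p) (dderiv q)
  | DMul p q => DAdd (DMul (dderiv p) q) (DMul p (dderiv q))
  end.

Definition dotp (C : fieldType) (N : nat) (u v : 'rV[C]_N) : C :=
  \sum_(i < N) u 0 i * v 0 i.

Definition lin (C : fieldType) (N : nat) (v : 'rV[C]_N) (m : nat) : dpoly C N :=
  foldr (fun i acc => DAdd (DMul (DCst (v 0 i)) (DVar i m)) acc) (DCst 0)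
        (enum 'I_N).

(* d^j e^{(alpha,phi)} = :bell alpha j  e^{(alpha,phi)}: *)
Fixpoint bell (C : fieldType) (N : nat) (alpha : 'rV[C]_N) (j : nat) : dpoly C N :=
  match j with
  | 0 => DCst 1
  | j.+1 => DAdd (dderiv (bell alpha j)) (DMul (lin alpha 0) (bell alpha j))
  end.

(* A "jet" J : nat -> 'rV_N records values J m = d^{m+1} phi (w). *)
Definition jeval (C : fieldType) (N : nat) (J : nat -> 'rV[C]_N) (p : dpoly C N) : C :=
  deval id (fun i m => J m 0 i) p.

(* Wick contraction of e^{(alpha,phi)(z)} with d^{m+1}phi_i(w) is
   alpha_i * d_w^{m+1} log(z-w) = - alpha_i m! (z-w)^{-(m+1)}.
   P with all contractions performed, as a polynomial in y = (z-w)^{-1}. *)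
Definition shift_poly (C : fieldType) (N : nat) (alpha : 'rV[C]_N)
    (J : nat -> 'rV[C]_N) (P : dpoly C N) : {poly C} :=
  deval (fun c => c%:P)
        (fun i m => (J m 0 i)%:P - (alpha 0 i * (m`!)%:R) *: 'X^(m.+1)) P.

(* Residue at z = w of  e^{(alpha,phi)}(z) :P e^{(beta,phi)}:(w), where
   s = (alpha,beta) is an integer:  coefficient of (z-w)^{-1} in
   (z-w)^s * sum_j (z-w)^j/j! bell_j * Ptilde((z-w)^{-1}),
   evaluated at the jet J (the result is the polynomial part of the field
   :R e^{(alpha+beta,phi)}:). *)
Definition ope_residue (C : fieldType) (N : nat) (alpha : 'rV[C]_N) (s : int)
    (P : dpoly C N) (J : nat -> 'rV[C]_N) : C :=
  let Pt := shift_poly alpha J P in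
  \sum_(j < size Pt + absz s)
     (jeval J (bell alpha j) / (j`!)%:R) *
     (if (0 <= s + (j : nat)%:Z + 1) then Pt`_(absz (s + (j : nat)%:Z + 1)) else 0).

Definition commutes_screening (C : fieldType) (N : nat) (alpha beta : 'rV[C]_N)
    (P : dpoly C N) : Prop :=
  exists s : int, dotp alpha beta = s%:~R /\
    forall J : nat -> 'rV[C]_N, ope_residue alpha s P J = 0.

(* fields :P e^{p Xi}: *)
Record field (C : Type) (N : nat) := Field { fpoly : dpoly C N; fexp : int }.
Arguments Field {C N}.

Definition field_eq (C : fieldType) (N : nat) (X Y : field C N) : Prop :=
  fexp X = fexp Y /\ forall J : nat -> 'rV[C]_N, jeval J (fpoly X) = jeval J (fpoly Y).

(* d :P e^{p Xi}: = :(dP + p (xi,d phi) P) e^{p Xi}: *)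
Definition fderiv (C : fieldType) (N : nat) (xi : 'rV[C]_N) (X : field C N) : field C N :=
  Field (DAdd (dderiv (fpoly X)) (DMul (DMul (DCst (fexp X)%:~R) (lin xi 0)) (fpoly X)))
        (fexp X).

Definition apply_diffop (C : fieldType) (N : nat) (xi : 'rV[C]_N) (c : C)
    (H : dpoly C N) (X : field C N) : field C N :=
  Field (DAdd (DMul (DCst c) (fpoly (fderiv xi X))) (DMul H (fpoly X))) (fexp X).

Definition inW (C : fieldType) (n : nat) (a : nat -> 'rV[C]_n.+1)
    (psi xi : 'rV[C]_n.+1) (X : field C n.+1) : Prop :=
  (forall i, (1 <= i <= n.-1)%N -> commutes_screening (a i) (xi *~ fexp X) (fpoly X))
  /\ commutes_screening psi (xi *~ fexp X) (fpoly X).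

Definition sumA (C : fieldType) (N : nat) (A : nat -> dpoly C N) (m : nat) : dpoly C N :=
  foldr (fun i acc => DAdd (A i) acc) (DCst 0) (iota 1 m).

(* Pcal A Q k n = P^{(k)}_n(A_{n-1},...,A_1,Q)  for n >= 1  (n = 0 unused) *)
Fixpoint Pcal (C : fieldType) (N : nat) (A : nat -> dpoly C N) (Q : dpoly C N)
    (k : C) (n : nat) : dpoly C N :=
  match n with
  | 0 => DCst 0
  | m.+1 =>
    if m is 0 then Q
    else DAdd (DMul (DCst (k + m%:R)) (dderiv (Pcal A Q (k + 1) m)))
              (DMul (DAdd Q (sumA A m)) (Pcal A Q (k + 1) m))
  end.

Definition ell (C : fieldType) (n : nat) (k : C) : C :=
  (n.-1)%:R / n%:R * k + n%:R - 2.

Definition Hcal (C : fieldType) (N : nat) (A : nat -> dpoly C N) (Q Y : dpoly C N)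
    (k : C) (n : nat) : dpoly C N :=
  DAdd (DMul (DCst (ell n k)) Y)
       (DAdd (foldr (fun i acc => DAdd (DMul (DCst ((n - i)%:R / n%:R)) (A i)) acc)
                    (DCst 0) (iota 1 n.-1))
             Q).

(* The residue of a screening current e^{(al,phi)}(z) against :p e^{(beta,phi)}:(w)
   pairs the Taylor coefficients of e^{(al,phi)} with the polynomial of Wick
   contractions of p, and it commutes with d up to the factor (al, d phi).  So,
   with K = k + n, an operator (K - 1) d + T preserves annihilation by E_i when
   T does not contract with a_i, and by Psi, whose pole is one order higher, when
   (psi, T) = 1 - K.  Along the recursion P_(m+1) = ((K - 1) d + T_m) P_m, where
   T_m = Q + A_1 + ... + A_m, the only screening to check afresh is E_m: it
   contracts with T_(m-1) and T_m with weights -K and K, and the two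
   contributions cancel because the coefficient of d is K - 1.  The second
   claim is n H^(k)_n - (n-1) H^(k+1)_(n-1) = (k + n - 1) Y + T_(n-1) together
   with d e^(-Xi) = - Y e^(-Xi). *)

From HB Require Import structures.
From mathcomp Require Import all_boot all_order all_algebra.
From mathcomp.algebra_tactics Require Import ring.
From mathcomp Require Import zify.
Import Order.TTheory GRing.Theory Num.Theory.
Set Implicit Arguments. Unset Strict Implicit. Unset Printing Implicit Defensive.
Local Open Scope ring_scope.

Section Evaluation.
Variables (C : fieldType) (N : nat).
Implicit Types (J : nat -> 'rV[C]_N) (p q : dpoly C N) (al u v : 'rV[C]_N).

Lemma jeval_cst J c : jeval J (DCst c) = c. Proof. by []. Qed.
Lemma jeval_var J i m : jeval J (DVar i m) = J m 0 i. Proof. by []. Qed.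
Lemma jeval_add J p q : jeval J (DAdd p q) = jeval J p + jeval J q. Proof. by []. Qed.
Lemma jeval_mul J p q : jeval J (DMul p q) = jeval J p * jeval J q. Proof. by []. Qed.
Definition jevalE := (jeval_cst, jeval_var, jeval_add, jeval_mul).

Lemma shift_poly_cst al J c : shift_poly al J (DCst c) = c%:P. Proof. by []. Qed.
Lemma shift_poly_var al J i m :
  shift_poly al J (DVar i m) = (J m 0 i)%:P - (al 0 i * (m`!)%:R) *: 'X^(m.+1).
Proof. by []. Qed.
Lemma shift_poly_add al J p q :
  shift_poly al J (DAdd p q) = shift_poly al J p + shift_poly al J q.
Proof. by []. Qed.
Lemma shift_poly_mul al J p q :
  shift_poly al J (DMul p q) = shift_poly al J p * shift_poly al J q.
Proof. by []. Qed.
Definition shift_polyE :=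
  (shift_poly_cst, shift_poly_var, shift_poly_add, shift_poly_mul).

Lemma shift_poly_coef0 al J p : (shift_poly al J p)`_0 = jeval J p.
Proof.
elim: p => [c|i m|p IHp q IHq|p IHp q IHq]; rewrite shift_polyE ?jevalE.
- by rewrite coefC.
- by rewrite coefB coefC coefZ coefXn mulr0 subr0.
- by rewrite coefD IHp IHq.
- by rewrite coef0M IHp IHq.
Qed.

Lemma jeval_foldr I J (F : I -> dpoly C N) s :
  jeval J (foldr (fun i acc => DAdd (F i) acc) (DCst 0) s) = \sum_(i <- s) jeval J (F i).
Proof. by elim: s => [|x s IH]; rewrite ?big_nil ?big_cons // jeval_add IH. Qed.

Lemma shift_poly_foldr I al J (F : I -> dpoly C N) s :
  shift_poly al J (foldr (fun i acc => DAdd (F i) acc) (DCst 0) s) =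
  \sum_(i <- s) shift_poly al J (F i).
Proof. by elim: s => [|x s IH]; rewrite ?big_nil ?big_cons // shift_poly_add IH. Qed.

Lemma dotpC u v : dotp u v = dotp v u.
Proof. by apply: eq_bigr => i _; rewrite mulrC. Qed.

Lemma dotp0l v : dotp 0 v = 0.
Proof. by rewrite /dotp big1 // => i _; rewrite mxE mul0r. Qed.

Lemma dotpDl u u' v : dotp (u + u') v = dotp u v + dotp u' v.
Proof. by rewrite /dotp -big_split; apply: eq_bigr => i _; rewrite mxE mulrDl. Qed.

Lemma dotp_suml I (r : seq I) (F : I -> 'rV[C]_N) v :
  dotp (\sum_(i <- r) F i) v = \sum_(i <- r) dotp (F i) v.
Proof. by elim: r => [|x r IH]; rewrite ?big_nil ?dotp0l // !big_cons dotpDl IH. Qed.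

Lemma dotpDr u v w : dotp u (v + w) = dotp u v + dotp u w.
Proof. by rewrite dotpC dotpDl !(dotpC u). Qed.

Lemma dotp_sumr I (r : seq I) (F : I -> 'rV[C]_N) u :
  dotp u (\sum_(i <- r) F i) = \sum_(i <- r) dotp u (F i).
Proof. by rewrite dotpC dotp_suml; apply: eq_bigr => i _; rewrite dotpC. Qed.

Lemma dotpNr u v : dotp u (v *~ -1) = - dotp u v.
Proof. by rewrite mulrN1z /dotp -sumrN; apply: eq_bigr => i _; rewrite mxE mulrN. Qed.

Lemma jeval_lin J v m : jeval J (lin v m) = dotp v (J m).
Proof. by rewrite /lin jeval_foldr big_enum. Qed.

Lemma shift_poly_lin al J v :
  shift_poly al J (lin v 0) = (dotp v (J 0%N))%:P - dotp al v *: 'X.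
Proof.
rewrite /lin shift_poly_foldr big_enum /= /dotp.
under eq_bigr => i _ do
  rewrite !shift_polyE /= mulr1 expr1 -!mul_polyC mulrBr -polyCM mulrA -polyCM.
rewrite sumrB -rmorph_sum -mulr_suml -rmorph_sum mul_polyC.
by congr (_ - _ *: _); apply: eq_bigr => i _; rewrite mulrC.
Qed.

End Evaluation.

Lemma poly_horner_eq0 (R : numDomainType) (q : {poly R}) :
  (forall t, q.[t] = 0) -> q = 0.
Proof.
move=> q0; apply/eqP/negPn/negP => nz_q.
suff: (size [seq i%:R : R | i <- iota 0 (size q)] < size q)%N.
  by rewrite size_map size_iota ltnn.
apply: max_poly_roots nz_q _ _.
- by apply/allP => x /mapP [i _ ->]; rewrite /root q0.
- by rewrite map_inj_uniq ?iota_uniq // => i j /eqP; rewrite eqr_nat => /eqP.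
Qed.

Section JetDerivative.
Variables (C : numFieldType) (N : nat).
Implicit Types (J : nat -> 'rV[C]_N) (p q : dpoly C N).

(* Moving the jet along the flow of the total derivative, [J m + t J (m+1)],
   evaluates [p] to a polynomial in [t] whose linear coefficient is [dderiv p]. *)
Definition jet_flow_poly J p : {poly C} :=
  deval (fun c => c%:P) (fun i m => (J m 0 i)%:P + J m.+1 0 i *: 'X) p.

Lemma horner_jet_flow_poly J p t :
  (jet_flow_poly J p).[t] = jeval (fun m => J m + t *: J m.+1) p.
Proof.
elim: p => [c|i m|p IHp q IHq|p IHp q IHq] /=; rewrite /jet_flow_poly /jeval /=.
- by rewrite hornerC.
- by rewrite hornerD hornerC hornerZ hornerX !mxE mulrC.
- by rewrite hornerD -/(jet_flow_poly J p) -/(jet_flow_poly J q) IHp IHq.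
- by rewrite hornerM -/(jet_flow_poly J p) -/(jet_flow_poly J q) IHp IHq.
Qed.

Lemma coef1_jet_flow_poly J p : (jet_flow_poly J p)`_1 = jeval J (dderiv p).
Proof.
have coef01 q : (jet_flow_poly J q)`_0 = jeval J q /\
                (jet_flow_poly J q)`_1 = jeval J (dderiv q).
  elim: q => [c|i m|q [IH0 IH1] r [JH0 JH1]|q [IH0 IH1] r [JH0 JH1]];
    rewrite /jet_flow_poly /= -?/(jet_flow_poly J q) -?/(jet_flow_poly J r) ?jevalE.
  - by rewrite !coefC.
  - by rewrite !coefD !coefC !coefZ !coefX /= mulr0 mulr1 addr0 add0r.
  - by rewrite !coefD IH0 IH1 JH0 JH1.
  - rewrite !coefM !big_ord_recr !big_ord0 /= !add0r IH0 JH0 IH1 JH1.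
    by rewrite addrC.
by case: (coef01 p).
Qed.

Lemma jeval_dderiv_eq0 p :
  (forall J, jeval J p = 0) -> forall J, jeval J (dderiv p) = 0.
Proof.
move=> p0 J; rewrite -coef1_jet_flow_poly.
suff -> : jet_flow_poly J p = 0 by rewrite coef0.
by apply: poly_horner_eq0 => t; rewrite horner_jet_flow_poly p0.
Qed.

Lemma eq_jeval_dderiv p q :
  (forall J, jeval J p = jeval J q) -> forall J, jeval J (dderiv p) = jeval J (dderiv q).
Proof.
move=> pq J; apply/eqP; rewrite -subr_eq0; apply/eqP.
have := jeval_dderiv_eq0 (p := DAdd p (DMul (DCst (-1)) q)) _ J.
rewrite /= !jevalE mul0r add0r mulN1r; apply=> J'.
by rewrite !jevalE pq mulN1r subrr.
Qed.

End JetDerivative.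

Section ContractionCoefficients.
Variables (C : numFieldType) (N : nat).
Implicit Types (J : nat -> 'rV[C]_N) (p q : dpoly C N) (al : 'rV[C]_N).

Fixpoint dsum (f : nat -> dpoly C N) n : dpoly C N :=
  if n is n'.+1 then DAdd (dsum f n') (f n') else DCst 0.

Lemma jeval_dsum J f n : jeval J (dsum f n) = \sum_(i < n) jeval J (f i).
Proof. by elim: n => [|n IH]; rewrite ?big_ord0 // big_ord_recr jeval_add IH. Qed.

Lemma jeval_dderiv_dsum J f n :
  jeval J (dderiv (dsum f n)) = \sum_(i < n) jeval J (dderiv (f i)).
Proof. by elim: n => [|n IH]; rewrite ?big_ord0 // big_ord_recr jeval_add IH. Qed.

Fixpoint dcoef al p (l : nat) : dpoly C N :=
  match p with
  | DCst c => if l == 0%N then DCst c else DCst 0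
  | DVar i m => if l == 0%N then DVar i m
                else if l == m.+1 then DCst (- (al 0 i * (m`!)%:R)) else DCst 0
  | DAdd p q => DAdd (dcoef al p l) (dcoef al q l)
  | DMul p q => dsum (fun j => DMul (dcoef al p j) (dcoef al q (l - j)%N)) l.+1
  end.

Fixpoint ddeg (X : Type) (p : dpoly X N) : nat :=
  match p with
  | DCst _ => 0
  | DVar _ m => m.+1
  | DAdd p q => maxn (ddeg p) (ddeg q)
  | DMul p q => (ddeg p + ddeg q)%N
  end.

Lemma dcoef_mul al p q l :
  dcoef al (DMul p q) l = dsum (fun j => DMul (dcoef al p j) (dcoef al q (l - j)%N)) l.+1.
Proof. by []. Qed.

Lemma jeval_dcoef al J p l : jeval J (dcoef al p l) = (shift_poly al J p)`_l.
Proof.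
elim: p l => [c|i m|p IHp q IHq|p IHp q IHq] l.
- by rewrite /= coefC; case: (l == 0%N).
- rewrite /= coefB coefC coefZ coefXn; case: l => [|l] /=; first by rewrite mulr0 subr0.
  by case: eqP => _; rewrite jevalE ?mulr1 ?mulr0 ?subr0 ?sub0r.
- by rewrite /= jeval_add coefD IHp IHq.
- rewrite dcoef_mul jeval_dsum shift_poly_mul coefM; apply: eq_bigr => j _.
  by rewrite jeval_mul IHp IHq.
Qed.

Lemma size_shift_poly al J p : (size (shift_poly al J p) <= (ddeg p).+1)%N.
Proof.
elim: p => [c|i m|p IHp q IHq|p IHp q IHq] /=.
- by rewrite size_polyC; case: (c != 0).
- apply: leq_trans (size_polyD _ _) _; rewrite geq_max size_polyC size_polyN.
  apply/andP; split; first by case: (_ != 0).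
  by rewrite (leq_trans (size_scale_leq _ _)) ?size_polyXn.
- rewrite shift_poly_add; apply: leq_trans (size_polyD _ _) _; rewrite geq_max.
  by rewrite (leq_trans IHp) ?(leq_trans IHq) // ltnS leq_max leqnn ?orbT.
- rewrite shift_poly_mul; apply: leq_trans (size_polyMleq _ _) _.
  by rewrite -subn1 leq_subLR add1n -addnS -addSn leq_add.
Qed.

Lemma shift_poly_coef_ddeg al J p l : (ddeg p < l)%N -> (shift_poly al J p)`_l = 0.
Proof. by move=> pl; rewrite nth_default // (leq_trans (size_shift_poly _ _ _)). Qed.

Definition dshift al J p : {poly C} :=
  \poly_(l < (ddeg p).+1) jeval J (dderiv (dcoef al p l)).

Lemma coef_dshift al J p l : (dshift al J p)`_l = jeval J (dderiv (dcoef al p l)).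
Proof.
rewrite coef_poly; case: ltnP => // pl; rewrite jeval_dderiv_eq0 // => J'.
by rewrite jeval_dcoef shift_poly_coef_ddeg.
Qed.

Lemma dshift_cst al J c : dshift al J (DCst c) = 0.
Proof. by apply/polyP => l; rewrite coef0 coef_dshift /=; case: (l == 0%N). Qed.

Lemma dshift_var al J i m : dshift al J (DVar i m) = (J m.+1 0 i)%:P.
Proof.
apply/polyP => l; rewrite coefC coef_dshift /=.
by case: (l == 0%N) => //; case: (l == m.+1).
Qed.

Lemma dshift_add al J p q : dshift al J (DAdd p q) = dshift al J p + dshift al J q.
Proof. by apply/polyP => l; rewrite coefD !coef_dshift /= jeval_add. Qed.

Lemma dshift_mul al J p q :
  dshift al J (DMul p q) =
  dshift al J p * shift_poly al J q + shift_poly al J p * dshift al J q.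
Proof.
apply/polyP => l; rewrite coef_dshift dcoef_mul jeval_dderiv_dsum coefD !coefM -big_split.
by apply: eq_bigr => j _; rewrite /= jeval_add !jeval_mul !coef_dshift !jeval_dcoef.
Qed.

(* With [y = (z - w)^-1] one has [d_w y = y^2], whence the [y^2 d/dy] term. *)
Lemma shift_poly_dderiv al J p :
  shift_poly al J (dderiv p) = dshift al J p + 'X^2 * (shift_poly al J p)^`().
Proof.
elim: p => [c|i m|p IHp q IHq|p IHp q IHq] /=.
- by rewrite dshift_cst !shift_polyE derivC mulr0 addr0.
- rewrite dshift_var !shift_polyE derivB derivC sub0r derivZ derivXn mulrN -scalerAr.
  rewrite -[m.+2]/(2 + m)%N exprD factS natrM -!mul_polyC !polyCM.
  rewrite -[_ *+ m.+1]mulr_natr !rmorph_nat; ring.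
- by rewrite !shift_poly_add dshift_add derivD IHp IHq; ring.
- by rewrite shift_poly_add !shift_poly_mul dshift_mul derivM IHp IHq; ring.
Qed.

End ContractionCoefficients.

Section Residues.
Variables (C : numFieldType) (N : nat).
Implicit Types (J : nat -> 'rV[C]_N) (p : dpoly C N) (al : 'rV[C]_N).

Definition ebell al J j := jeval J (bell al j) / (j`!)%:R.

Definition nbell al j : dpoly C N := DMul (DCst (j`!)%:R^-1) (bell al j).

Lemma jeval_nbell al J j : jeval J (nbell al j) = ebell al J j.
Proof. by rewrite jeval_mul mulrC. Qed.

Lemma ebell0 al J : ebell al J 0 = 1.
Proof. by rewrite /ebell jeval_cst divr1. Qed.

Lemma ebell1 al J : ebell al J 1 = jeval J (lin al 0).
Proof. by rewrite /ebell /= !jevalE divr1 mulr1 add0r. Qed.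

Lemma jeval_dderiv_nbell al J j :
  jeval J (dderiv (nbell al j)) =
  j.+1%:R * ebell al J j.+1 - jeval J (lin al 0) * ebell al J j.
Proof.
rewrite /= !jevalE /ebell /= !jevalE mul0r add0r factS natrM.
have fact_neq0 : (j`!)%:R != 0 :> C by rewrite pnatr_eq0 -lt0n fact_gt0.
have Sj_neq0 : j.+1%:R != 0 :> C by rewrite pnatr_eq0.
by field; rewrite fact_neq0 addrC natr1 Sj_neq0.
Qed.

(* The OPE residue against [:p e^{(beta,phi)}:], with [o = (al, beta) + 1]. *)
Definition resid al o J p B :=
  \sum_(0 <= j < B) ebell al J j * (shift_poly al J p)`_(j + o).

Definition resid_poly al o p B : dpoly C N :=
  dsum (fun j => DMul (nbell al j) (dcoef al p (j + o))) B.

Lemma jeval_resid_poly al o J p B : jeval J (resid_poly al o p B) = resid al o J p B.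
Proof.
rewrite jeval_dsum /resid big_mkord; apply: eq_bigr => j _.
by rewrite jeval_mul jeval_nbell jeval_dcoef.
Qed.

Lemma jeval_dderiv_resid_poly al o J p B :
  jeval J (dderiv (resid_poly al o p B)) =
  \sum_(0 <= j < B) ((j.+1%:R * ebell al J j.+1 - jeval J (lin al 0) * ebell al J j)
       * (shift_poly al J p)`_(j + o) + ebell al J j * (dshift al J p)`_(j + o)).
Proof.
rewrite jeval_dderiv_dsum big_mkord; apply: eq_bigr => j _.
rewrite (_ : dderiv (DMul _ _) = DAdd (DMul (dderiv (nbell al j)) (dcoef al p (j + o)))
                                    (DMul (nbell al j) (dderiv (dcoef al p (j + o))))) //.
rewrite jeval_add jeval_mul [X in _ + X]jeval_mul jeval_dderiv_nbell jeval_nbell.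
by rewrite coef_dshift jeval_dcoef.
Qed.

Lemma resid_bound al o J p B B' :
  (size (shift_poly al J p) <= B)%N -> (B <= B')%N -> resid al o J p B = resid al o J p B'.
Proof.
move=> size_le BB'; rewrite /resid [in RHS](@big_cat_nat _ _ _ B) //=.
suff -> : \sum_(B <= j < B') ebell al J j * (shift_poly al J p)`_(j + o) = 0 by rewrite addr0.
rewrite big_nat_cond big1 // => j /andP [/andP [Bj _] _].
by rewrite nth_default ?mulr0 // (leq_trans size_le) // (leq_trans Bj) ?leq_addr.
Qed.

Lemma resid_scale al o J c p B :
  resid al o J (DMul (DCst c) p) B = c * resid al o J p B.
Proof.
by rewrite /resid mulr_sumr; apply: eq_bigr => j _; rewrite shift_polyE coefCM; ring.
Qed.

Lemma resid_linear al J p B z0 z1 :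
  shift_poly al J p = z0%:P + z1 *: 'X -> (2 <= B)%N ->
  resid al 0 J p B = z0 + jeval J (lin al 0) * z1 /\ resid al 1 J p B = z1.
Proof.
move=> pz B2; have size_le : (size (shift_poly al J p) <= 2)%N.
  rewrite pz; apply: leq_trans (size_polyD _ _) _; rewrite geq_max size_polyC.
  by rewrite (leq_trans (size_scale_leq _ _)) ?size_polyX //; case: (_ != 0).
rewrite -(resid_bound 0 size_le B2) -(resid_bound 1 size_le B2).
rewrite /resid !big_nat_recr //= !big_nil.
by rewrite !add0r ebell0 ebell1 pz !coefD !coefC !coefZ !coefX /=; split; ring.
Qed.

Lemma ope_residue0 al p J :
  ope_residue al 0 p J = resid al 1 J p (size (shift_poly al J p)).
Proof.
rewrite /ope_residue /resid addn0 big_mkord; apply: eq_bigr => j _.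
by rewrite add0r -PoszD.
Qed.

Lemma ope_residueN1 al p J :
  ope_residue al (-1) p J = resid al 0 J p (size (shift_poly al J p)).+1.
Proof.
rewrite /ope_residue /resid big_mkord -addn1; apply: eq_bigr => j _.
by rewrite [-1 + _]addrC subrK addn0.
Qed.

End Residues.

Lemma coef_X2_deriv (R : nzRingType) (q : {poly R}) l :
  ('X^2 * q^`())`_l = l.-1%:R * q`_l.-1.
Proof.
rewrite coefXnM; case: l => [|[|l]] /=; rewrite ?mul0r //.
by rewrite coef_deriv subn2 mulr_natl.
Qed.

Section ScreeningCalculus.
Variables (C : numFieldType) (N : nat).
Implicit Types (J : nat -> 'rV[C]_N) (p g T : dpoly C N) (al : 'rV[C]_N).

Definition dop c T p : dpoly C N := DAdd (DMul (DCst c) (dderiv p)) (DMul T p).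

Lemma ddeg_dop c T p : (ddeg p <= ddeg (dop c T p))%N.
Proof. by rewrite /= leq_max leq_addl orbT. Qed.

Lemma shift_poly_dop al J c T p :
  shift_poly al J (dop c T p) =
  c%:P * (dshift al J p + 'X^2 * (shift_poly al J p)^`())
  + shift_poly al J T * shift_poly al J p.
Proof. by rewrite shift_poly_add !shift_poly_mul shift_poly_dderiv. Qed.

(* The residue commutes with [d] up to the exponential factor of the screening
   current; the remaining terms [j e_j q_j] telescope. *)
Lemma resid1_dop al J c T p b B :
  shift_poly al J T = (jeval J T)%:P + b *: 'X -> (shift_poly al J p)`_B = 0 ->
  resid al 1 J (dop c T p) B =
  c * (jeval J (dderiv (resid_poly al 1 p B)) + jeval J (lin al 0) * resid al 1 J p B)
  + jeval J T * resid al 1 J p B + b * resid al 0 J p B.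
Proof.
move=> shiftT pB; set q := shift_poly al J p.
set f := fun j => j%:R * ebell al J j * q`_j.
apply/eqP; rewrite eq_sym -subr_eq0; apply/eqP.
transitivity (c * \sum_(0 <= j < B) (f j.+1 - f j)); last first.
  by rewrite telescope_sumr // /f pB !mulr0 !mul0r subrr mulr0.
rewrite jeval_dderiv_resid_poly /resid mulrDr !mulr_sumr -!big_split -sumrB /=.
apply: eq_bigr => j _; rewrite shift_poly_dop shiftT (mulrDl (_%:P)) -scalerAl.
rewrite !coefD !coefCM coefD coefZ coefXM coef_X2_deriv !addn1 !addn0 /= /f /q; ring.
Qed.

Lemma resid0_dop al J c T p B :
  shift_poly al J T = (jeval J T)%:P + c *: 'X -> (shift_poly al J p)`_B.-1 = 0 ->
  resid al 0 J (dop c T p) B =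
  c * (jeval J (dderiv (resid_poly al 0 p B)) + jeval J (lin al 0) * resid al 0 J p B)
  + jeval J T * resid al 0 J p B.
Proof.
move=> shiftT pB; set q := shift_poly al J p.
set f := fun j => j%:R * ebell al J j * q`_j.-1.
apply/eqP; rewrite eq_sym -subr_eq0; apply/eqP.
transitivity (c * \sum_(0 <= j < B) (f j.+1 - f j)); last first.
  by rewrite telescope_sumr // /f pB !mulr0 !mul0r subrr mulr0.
rewrite jeval_dderiv_resid_poly /resid mulrDr !mulr_sumr -!big_split -sumrB /=.
apply: eq_bigr => j _; rewrite shift_poly_dop shiftT (mulrDl (_%:P)) -scalerAl.
rewrite !coefD !coefCM coefD coefZ coefXM coef_X2_deriv !addn0 /f /q.
by case: j => [|j] /=; ring.
Qed.

Definition screened al o p :=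
  forall B, ((ddeg p).+2 <= B)%N -> forall J, resid al o J p B = 0.

Lemma screened_dderiv_resid_poly al o p B J :
  screened al o p -> ((ddeg p).+2 <= B)%N -> jeval J (dderiv (resid_poly al o p B)) = 0.
Proof.
by move=> scr_p pB; apply: jeval_dderiv_eq0 => J'; rewrite jeval_resid_poly scr_p.
Qed.

Lemma screened_scale al o c p : screened al o p -> screened al o (DMul (DCst c) p).
Proof. by move=> scr_p B pB J; rewrite resid_scale scr_p ?mulr0. Qed.

Definition uncontracted al p := forall J l, (0 < l)%N -> (shift_poly al J p)`_l = 0.

Lemma uncontractedP al p :
  (forall J, shift_poly al J p = (jeval J p)%:P) -> uncontracted al p.
Proof. by move=> shift_p J l l_gt0; rewrite shift_p coefC gtn_eqF. Qed.

Lemma uncontracted_shift_poly al J p :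
  uncontracted al p -> shift_poly al J p = (jeval J p)%:P.
Proof.
move=> unc_p; apply/polyP => -[|l]; first by rewrite coefC shift_poly_coef0.
by rewrite coefC unc_p.
Qed.

Lemma uncontracted_dshift al J p :
  uncontracted al p -> dshift al J p = (jeval J (dderiv p))%:P.
Proof.
move=> unc_p; apply/polyP => l; rewrite coef_dshift coefC.
case: l => [|l] /=; last by apply: jeval_dderiv_eq0 => J'; rewrite jeval_dcoef unc_p.
by apply: eq_jeval_dderiv => J'; rewrite jeval_dcoef shift_poly_coef0.
Qed.

Lemma shift_poly_dop_uncontracted al J c T p :
  uncontracted al p ->
  shift_poly al J (dop c T p) =
  (c * jeval J (dderiv p))%:P + shift_poly al J T * (jeval J p)%:P.
Proof.
move=> unc_p; rewrite shift_poly_dop uncontracted_dshift //.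
by rewrite (uncontracted_shift_poly J unc_p) derivC mulr0 addr0 polyCM.
Qed.

Lemma uncontracted_dop al c T p :
  uncontracted al T -> uncontracted al p -> uncontracted al (dop c T p).
Proof.
move=> unc_T unc_p; apply: uncontractedP => J.
by rewrite shift_poly_dop_uncontracted // uncontracted_shift_poly // -polyCM -polyCD.
Qed.

Lemma screened1_dop al c T p :
  uncontracted al T -> screened al 1 p -> screened al 1 (dop c T p).
Proof.
move=> unc_T scr_p B dopB J.
have pB : ((ddeg p).+2 <= B)%N by apply: leq_trans dopB; rewrite !ltnS ddeg_dop.
have shiftT : shift_poly al J T = (jeval J T)%:P + 0 *: 'X.
  by rewrite scale0r addr0 uncontracted_shift_poly.
rewrite (resid1_dop c shiftT); last by rewrite shift_poly_coef_ddeg // ltnW.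
by rewrite screened_dderiv_resid_poly // !scr_p // !(mulr0, mul0r, addr0).
Qed.

Lemma screened0_dop al c T p :
  (forall J, shift_poly al J T = (jeval J T)%:P + c *: 'X) ->
  screened al 0 p -> screened al 0 (dop c T p).
Proof.
move=> shiftT scr_p B dopB J.
have pB : ((ddeg p).+2 <= B)%N by apply: leq_trans dopB; rewrite !ltnS ddeg_dop.
rewrite resid0_dop //; last by rewrite shift_poly_coef_ddeg //; case: B pB {dopB}.
by rewrite screened_dderiv_resid_poly // !scr_p // !(mulr0, addr0).
Qed.

(* The screening that is new at a step of the recursion: it does not annihilate
   [g], but the contributions of [T'] and [T], of weights [-K] and [K], cancel
   because the coefficient of [d] is [K - 1]. *)
Lemma screened1_dop_fresh al K T T' g p :
  (forall J, shift_poly al J g =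
     ((K - 1) * jeval J (dderiv p) + jeval J T' * jeval J p)%:P + (K * jeval J p) *: 'X) ->
  (forall J, shift_poly al J T = (jeval J T)%:P - K *: 'X) ->
  (forall J, jeval J T = jeval J T' + jeval J (lin al 0)) ->
  screened al 1 (dop (K - 1) T g).
Proof.
move=> shift_g shiftT TT' B dopB J.
have B2 : (2 <= B)%N by apply: leq_trans dopB.
have [res0_g res1_g] := resid_linear (shift_g J) B2.
have dres1_g : jeval J (dderiv (resid_poly al 1 g B)) = K * jeval J (dderiv p).
  rewrite (@eq_jeval_dderiv _ _ _ (DMul (DCst K) p)) => [|J'].
    by rewrite /= !jevalE mul0r add0r.
  by rewrite jeval_resid_poly (proj2 (resid_linear (shift_g J') B2)).
have shiftT' : shift_poly al J T = (jeval J T)%:P + (- K) *: 'X.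
  by rewrite scaleNr shiftT.
have gB : (shift_poly al J g)`_B = 0.
  by rewrite shift_g coefD coefC coefZ coefX (gtn_eqF B2) (gtn_eqF (ltnW B2)) mulr0 addr0.
rewrite (resid1_dop (K - 1) shiftT' gB) res0_g res1_g dres1_g TT'; ring.
Qed.

End ScreeningCalculus.

Lemma Pcal_dop (C : numFieldType) N (A : nat -> dpoly C N) Q k m : (1 <= m)%N ->
  Pcal A Q k m.+1 = dop (k + m%:R) (DAdd Q (sumA A m)) (Pcal A Q (k + 1) m).
Proof. by case: m. Qed.

Section WeightSums.
Variables (C : fieldType) (N : nat) (a : nat -> 'rV[C]_N) (psi : 'rV[C]_N).
Implicit Types (J : nat -> 'rV[C]_N) (al : 'rV[C]_N).

Definition weight_sum j := psi + \sum_(1 <= i < j.+1) a i.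

Lemma weight_sumS j : weight_sum j.+1 = weight_sum j + a j.+1.
Proof. by rewrite /weight_sum big_nat_recr //= addrA. Qed.

Local Notation T j := (DAdd (lin psi 0) (sumA (fun i => lin (a i) 0) j)).

Lemma jeval_T J j : jeval J (T j) = dotp (weight_sum j) (J 0%N).
Proof.
rewrite jeval_add /sumA jeval_foldr /weight_sum dotpDl dotp_suml jeval_lin.
by rewrite /index_iota subSS subn0; under eq_bigr do rewrite jeval_lin.
Qed.

Lemma shift_poly_T al J j :
  shift_poly al J (T j) = (jeval J (T j))%:P - dotp al (weight_sum j) *: 'X.
Proof.
rewrite shift_poly_add /sumA shift_poly_foldr shift_poly_lin jeval_T.
under eq_bigr do rewrite shift_poly_lin.
rewrite sumrB -rmorph_sum -scaler_suml /weight_sum dotpDl dotp_suml dotpDr dotp_sumr.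
rewrite /index_iota subSS subn0 rmorphD scalerDl; ring.
Qed.

End WeightSums.

Section Recursion.
Variables (C : numFieldType) (N n : nat) (K : C) (a : nat -> 'rV[C]_N) (psi : 'rV[C]_N).
Hypothesis a_norm : forall i, (1 <= i <= n.-1)%N -> dotp (a i) (a i) = 2 * K.
Hypothesis a_next :
  forall i, (1 <= i)%N -> (i.+1 <= n.-1)%N -> dotp (a i) (a i.+1) = - K.
Hypothesis a_far : forall i j, (1 <= i <= n.-1)%N -> (1 <= j <= n.-1)%N ->
  i != j -> i != j.+1 -> j != i.+1 -> dotp (a i) (a j) = 0.
Hypothesis a1_psi : dotp (a 1%N) psi = - K.
Hypothesis a_psi : forall i, (2 <= i <= n.-1)%N -> dotp (a i) psi = 0.
Hypothesis psi_norm : dotp psi psi = 1.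

Local Notation w := (weight_sum a psi).

Lemma dotp_a_weight_sum i j : (1 <= i <= n.-1)%N -> (j <= n.-1)%N ->
  dotp (a i) (w j) = K * ((j == i)%:R - (j.+1 == i)%:R).
Proof.
move=> i_range; elim: j => [|j IH] jn.
  rewrite /weight_sum big_geq // addr0.
  have [-> | i_neq1] := eqVneq i 1%N; first by rewrite a1_psi /=; ring.
  have -> : (0 == i) = false by lia.
  have i_gt1 : (1 < i)%N by lia.
  by rewrite a_psi ?subrr ?mulr0 // i_gt1; case/andP: i_range.
rewrite weight_sumS dotpDr IH; last exact: ltnW.
have j1_range : (0 < j.+1 <= n.-1)%N by rewrite jn.
have [ij|ji|->] := ltngtP i j.+1.
- rewrite (gtn_eqF (ltn_trans ij (ltnSn _))).
  have [<-|i_neq_j] := eqVneq i j.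
    by rewrite a_next ?(gtn_eqF (ltnW (ltnSn i.+1))) /=; [ring | lia | lia].
  by rewrite a_far /=; try lia; ring.
- rewrite (ltn_eqF (ltn_trans (ltnSn j) ji)).
  have [->|i_neq] := eqVneq i j.+2.
    by rewrite dotpC a_next ?eqxx /=; [ring | lia | lia].
  by rewrite a_far /=; try lia; ring.
- by rewrite a_norm // (ltn_eqF (ltnSn j)) (gtn_eqF (ltnSn j.+1)) /=; ring.
Qed.

Lemma dotp_psi_weight_sum j : (j <= n.-1)%N -> dotp psi (w j) = 1 - K * (0 < j)%N%:R.
Proof.
elim: j => [|j IH] jn; first by rewrite /weight_sum big_geq // addr0 psi_norm /=; ring.
rewrite weight_sumS dotpDr IH; last exact: ltnW.
by case: j {IH} jn => [|j] jn; rewrite dotpC ?a1_psi ?a_psi //=; ring.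
Qed.

Local Notation A := (fun i => lin (a i) 0).
Local Notation Q := (lin psi 0).
Local Notation T j := (DAdd Q (sumA A j)).

Lemma uncontracted_T al j : dotp al (w j) = 0 -> uncontracted al (T j).
Proof. by move=> al_w; apply: uncontractedP => J; rewrite shift_poly_T al_w scale0r subr0. Qed.

Lemma uncontracted_Pcal i m k : (2 <= i <= n.-1)%N -> (1 <= m < i)%N ->
  uncontracted (a i) (Pcal A Q k m).
Proof.
move=> i_range; elim: m k => [//|[|m] IH] k /andP [_ mi].
  apply: uncontractedP => J.
  by rewrite /= shift_poly_lin jeval_lin a_psi // scale0r subr0.
rewrite Pcal_dop //; apply: uncontracted_dop; last exact: IH (ltnW mi).
apply: uncontracted_T; rewrite dotp_a_weight_sum ?(ltn_eqF mi) ?(ltn_eqF (ltnW mi)).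
- by rewrite subrr mulr0.
- by case/andP: i_range => /ltnW ->.
- by case/andP: i_range => _ /(leq_trans mi) /ltnW /ltnW.
Qed.

Lemma shift_poly_Pcal_fresh m k : (1 <= m <= n.-1)%N -> k + m%:R = K ->
  exists p, forall J, shift_poly (a m) J (Pcal A Q k m) =
    ((K - 1) * jeval J (dderiv p) + jeval J (T m.-1) * jeval J p)%:P
    + (K * jeval J p) *: 'X.
Proof.
case: m => [//|[|m]] /andP [_ mn] km.
  exists (DCst 1) => J; rewrite /= shift_poly_lin a1_psi !jevalE jeval_lin.
  by rewrite mulr0 !mulr1 add0r addr0 scaleNr opprK.
have c_eq : k + m.+1%:R = K - 1 by rewrite -km -natr1; ring.
exists (Pcal A Q (k + 1) m.+1) => J.
rewrite Pcal_dop // c_eq shift_poly_dop_uncontracted; last first.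
  by apply: uncontracted_Pcal; rewrite ?leqnn //= mn andbT.
rewrite shift_poly_T dotp_a_weight_sum ?eqxx ?(ltn_eqF (ltnSn m.+1)) //=;
  last exact: ltnW.
rewrite -!mul_polyC !(polyCD, polyCB, polyCM, polyCN); ring.
Qed.

Lemma Pcal_screened m k : (1 <= m <= n)%N -> k + m%:R = K ->
  screened psi 0 (Pcal A Q k m) /\
  forall i, (1 <= i < m)%N -> screened (a i) 1 (Pcal A Q k m).
Proof.
elim: m k => [//|[|m] IH] k /andP [_ mn] km.
  split=> [B QB J | [|[]] //]; have B2 : (2 <= B)%N by apply: leq_trans QB.
  have shiftQ : shift_poly psi J Q = (dotp psi (J 0%N))%:P + (-1) *: 'X.
    by rewrite shift_poly_lin psi_norm scaleN1r scale1r.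
  by rewrite (proj1 (resid_linear shiftQ B2)) jeval_lin mulrN1 subrr.
have c_eq : k + m.+1%:R = K - 1 by rewrite -km -natr1; ring.
have km' : k + 1 + m.+1%:R = K by rewrite -km -natr1; ring.
have [scr_psi scr_a] : screened psi 0 (Pcal A Q (k + 1) m.+1) /\
    forall i, (1 <= i < m.+1)%N -> screened (a i) 1 (Pcal A Q (k + 1) m.+1).
  exact: IH (ltnW mn) km'.
rewrite Pcal_dop // c_eq; split.
  apply: screened0_dop scr_psi => J.
  rewrite shift_poly_T dotp_psi_weight_sum; last by rewrite -ltnS (ltn_predK mn).
  by rewrite /= mulr1 -scaleNr opprB.
move=> i /andP [i_gt0]; rewrite ltnS leq_eqVlt => /orP [/eqP -> | i_lt].
  have m1_range : (1 <= m.+1 <= n.-1)%N by rewrite /= -ltnS (ltn_predK mn).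
  have [p shift_P] := shift_poly_Pcal_fresh m1_range km'.
  apply: screened1_dop_fresh shift_P _ _ => J.
    rewrite shift_poly_T dotp_a_weight_sum ?eqxx ?(gtn_eqF (ltnSn m.+1)) //=.
    by rewrite subr0 mulr1.
  by rewrite !jeval_T weight_sumS dotpDl jeval_lin.
apply: screened1_dop (scr_a i _); last by rewrite i_gt0.
apply: uncontracted_T.
rewrite dotp_a_weight_sum ?(gtn_eqF i_lt) ?(gtn_eqF (ltn_trans i_lt (ltnSn _))).
- by rewrite subrr mulr0.
- by rewrite i_gt0 -ltnS (ltn_predK mn) (leq_trans i_lt (ltnW mn)).
- by rewrite -ltnS (ltn_predK mn).
Qed.

End Recursion.

Lemma commutes_screening1 (C : numFieldType) N (al beta : 'rV[C]_N) p :
  dotp al beta = 0 -> screened al 1 p -> commutes_screening al beta p.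
Proof.
move=> al_beta scr_p; exists 0; split=> [|J]; first by rewrite al_beta.
rewrite ope_residue0 (@resid_bound _ _ _ _ _ _ _ (ddeg p).+2) ?scr_p //.
exact: leq_trans (size_shift_poly _ _ _) (leqnSn _).
Qed.

Lemma commutes_screening0 (C : numFieldType) N (al beta : 'rV[C]_N) p :
  dotp al beta = -1 -> screened al 0 p -> commutes_screening al beta p.
Proof.
move=> al_beta scr_p; exists (-1); split=> [|J]; first by rewrite al_beta.
rewrite ope_residueN1 (@resid_bound _ _ _ _ _ _ _ (ddeg p).+2) ?scr_p //.
exact: size_shift_poly.
Qed.

Lemma ell_comb (C : numFieldType) (k : C) m :
  m.+2%:R * ell m.+2 k - m.+1%:R * ell m.+1 (k + 1) = k + m.+2%:R - 1.
Proof.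
have m1_neq0 : m.+1%:R != 0 :> C by rewrite pnatr_eq0.
have m2_neq0 : m.+2%:R != 0 :> C by rewrite pnatr_eq0.
rewrite /ell /= -[m.+2%:R]natr1 -[m.+1%:R]natr1 in m2_neq0 *.
by field; rewrite natr1 m1_neq0 /= -natr1 m2_neq0.
Qed.

Lemma big_iota1S (R : nmodType) (F : nat -> R) j :
  \sum_(i <- iota 1 j.+1) F i = \sum_(i <- iota 1 j) F i + F j.+1.
Proof. by rewrite -[j.+1]addn1 iotaD big_cat big_seq1 add1n addn1. Qed.

Lemma Hcal_weights_comb (C : numFieldType) (x : nat -> C) m :
  m.+2%:R * \sum_(i <- iota 1 m.+1) ((m.+2 - i)%:R / m.+2%:R * x i)
  - m.+1%:R * \sum_(i <- iota 1 m) ((m.+1 - i)%:R / m.+1%:R * x i)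
  = \sum_(i <- iota 1 m.+1) x i.
Proof.
have mulKr_nat l (y z : C) : l.+1%:R * (y / l.+1%:R * z) = y * z.
  by rewrite mulrA mulrCA divff ?mulr1 ?pnatr_eq0.
rewrite !big_iota1S subSnn mulrDr !mulr_sumr addrAC -sumrB mulKr_nat mul1r.
congr (_ + _).
rewrite big_seq_cond [RHS]big_seq_cond; apply: eq_bigr => i /andP [].
rewrite mem_iota => /andP [_ im] _.
rewrite !mulKr_nat // !natrB; [ring | lia | lia].
Qed.

Lemma jeval_Hcal (C : fieldType) N (J : nat -> 'rV[C]_N) A Q Y k n :
  jeval J (Hcal A Q Y k n) =
  ell n k * jeval J Y + \sum_(i <- iota 1 n.-1) ((n - i)%:R / n%:R * jeval J (A i))
  + jeval J Q.
Proof. by rewrite !jeval_add jeval_mul jeval_foldr addrA. Qed.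

Lemma jeval_Hcal_comb (C : numFieldType) N (J : nat -> 'rV[C]_N) A Q Y k m :
  m.+2%:R * jeval J (Hcal A Q Y k m.+2) - m.+1%:R * jeval J (Hcal A Q Y (k + 1) m.+1) =
  (k + m.+2%:R - 1) * jeval J Y + jeval J (DAdd Q (sumA A m.+1)).
Proof.
rewrite !jeval_Hcal jeval_add jeval_foldr -ell_comb.
rewrite -(Hcal_weights_comb (fun i => jeval J (A i))) -[m.+2%:R]natr1 /=; ring.
Qed.

Lemma field_eq_Pcal (C : numFieldType) N (A : nat -> dpoly C N) Q xi k n :
  (2 <= n)%N ->
  field_eq (Field (DMul (DCst (-1)) (Pcal A Q k n)) (-1))
    (apply_diffop xi (k + n%:R - 1)
       (DAdd (DMul (DCst n%:R) (Hcal A Q (lin xi 0) k n))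
             (DMul (DCst (- n.-1%:R)) (Hcal A Q (lin xi 0) (k + 1) n.-1)))
       (Field (DMul (DCst (-1)) (Pcal A Q (k + 1) n.-1)) (-1))).
Proof.
case: n => [|[|m]] // _; split=> // J.
rewrite Pcal_dop // /apply_diffop /fderiv; cbn [fpoly fexp].
change m.+2.-1 with m.+1.
move: (jeval_Hcal_comb J A Q (lin xi 0) k m).
set T := DAdd Q _; set P := Pcal _ _ _ _; set H1 := Hcal _ _ _ k _.
set H2 := Hcal _ _ _ (k + 1) _; clearbody T P H1 H2 => HT.
rewrite !jevalE -/(dderiv P) (mulNr (m.+1%:R)) HT -[m.+2%:R]natr1; ring.
Qed.

Theorem lemma2p3 (C : numClosedFieldType) (n : nat) (k : C)
    (a : nat -> 'rV[C]_n.+1) (psi xi : 'rV[C]_n.+1) :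
  (2 <= n)%N ->
  k + n%:R != 0 ->
  (forall i, (1 <= i <= n.-1)%N -> dotp (a i) (a i) = 2 * (k + n%:R)) ->
  (forall i, (1 <= i)%N -> (i.+1 <= n.-1)%N -> dotp (a i) (a i.+1) = - (k + n%:R)) ->
  (forall i j, (1 <= i <= n.-1)%N -> (1 <= j <= n.-1)%N ->
     i != j -> i != j.+1 -> j != i.+1 -> dotp (a i) (a j) = 0) ->
  dotp (a 1%N) psi = - (k + n%:R) ->
  (forall i, (2 <= i <= n.-1)%N -> dotp (a i) psi = 0) ->
  (forall i, (1 <= i <= n.-1)%N -> dotp (a i) xi = 0) ->
  dotp psi psi = 1 ->
  dotp psi xi = 1 ->
  dotp xi xi = 0 ->
  let A := fun i => lin (a i) 0 in
  let Q := lin psi 0 in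
  let Y := lin xi 0 in
  let F := Field (DMul (DCst (-1)) (Pcal A Q k n)) (-1) in
  let F' := Field (DMul (DCst (-1)) (Pcal A Q (k + 1) n.-1)) (-1) in
  inW a psi xi F /\
  field_eq F
    (apply_diffop xi (k + n%:R - 1)
       (DAdd (DMul (DCst n%:R) (Hcal A Q Y k n))
             (DMul (DCst (- (n.-1)%:R)) (Hcal A Q Y (k + 1) n.-1)))
       F').
Proof.
move=> n_gt1 _ a_norm a_next a_far a1_psi a_psi a_xi psi_norm psi_xi _ A Q Y F F'.
have n_range : (1 <= n <= n)%N by rewrite leqnn andbT ltnW.
have [scr_psi scr_a] :=
  Pcal_screened a_norm a_next a_far a1_psi a_psi psi_norm n_range (erefl (k + n%:R)).
split; last exact: field_eq_Pcal.
split=> [i i_range|].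
  apply: commutes_screening1; first by rewrite dotpNr a_xi ?oppr0.
  apply/screened_scale/scr_a; case/andP: i_range => -> i_le /=.
  by rewrite (leq_ltn_trans i_le) // ltn_predL ltnW.
apply: commutes_screening0; first by rewrite dotpNr psi_xi.
exact: screened_scale.
Qed.
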